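(* Let $G$ be a graph, $b\ge0$, $\beta:E(G)\to\{0,1,2,3\}$, $C$ a vertex cover of $G$, and let $\delta$ be a $b$-bend $\beta$-restricted RAC drawing of $G$. Let $T$ be a type whose vertices have exactly two neighbors in $C$, and let $T'\subseteq T$ consist of all members of $T$ which have no bends in $\delta$. Then $T'$ contains at most four members that are involved in crossings with other members of $T'$ in $\delta$.
   Context: All graphs are simple and undirected. A drawing of a graph $G=(V,E)$ maps vertices injectively to points of $\mathbb{R}^2$ and each edge $uv$ to a simple curve joining the images of $u$ and $v$, such that no vertex image lies in the relative interior of the image of an edge not incident to it. A polyline drawing is a drawing in which each edge is drawn as a union of closed straight-line segments $\lambda_1,\dots,\lambda_t$, where consecutive segments share exactly one endpoint and form an angle different from $180^\circ$, and non-consecutive segments are disjoint; the shared points are the bends of the edge. A crossing of two edges is a common point of the relative interiors of their drawings; drawings have finitely many crossings. Two edges have a right-angle crossing if the crossing lies in the relative interiors of the respective segments and these segments are orthogonal. Given $b\in\mathbb{N}$ and $\beta:E\to\{0,1,2,3\}$, a $b$-bend $\beta$-restricted RAC drawing of $G$ is a polyline drawing in which every crossing is a right-angle crossing, the total number of bends is at most $b$, and each edge $e$ has at most $\beta(e)$ bends. Types: $V(G)\setminus C$ is partitioned so that two vertices have the same type iff they have the same set of neighbors in $C$. A member of a type is a vertex of the type together with its incident edges; a member has no bends if none of its incident edges has a bend, and a member is involved in a crossing if one of its incident edges is. *)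

From mathcomp Require Import all_boot all_order all_algebra.
From mathcomp Require Import reals.
Set Implicit Arguments. Unset Strict Implicit. Unset Printing Implicit Defensive.
Import Order.TTheory GRing.Theory Num.Theory.
Local Open Scope ring_scope.

Section Geometry.
Variable R : realType.

Definition point := (R * R)%type.

Definition lerp (a b : point) (t : R) : point :=
  (a.1 + t * (b.1 - a.1), a.2 + t * (b.2 - a.2)).

Definition on_seg (a b p : point) : Prop :=
  exists t : R, 0 <= t <= 1 /\ p = lerp a b t.

Definition on_oseg (a b p : point) : Prop :=
  exists t : R, 0 < t < 1 /\ p = lerp a b t.

Definition orth (a b c d : point) : Prop :=
  (b.1 - a.1) * (d.1 - c.1) + (b.2 - a.2) * (d.2 - c.2) = 0.

(** A polyline given by its sequence of points q_0,...,q_n (n = number of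
    segments, segment i is [q_i, q_{i+1}]); inner points are the bends. *)
Definition pnth (pts : seq point) (i : nat) : point := nth (0, 0) pts i.
Definition nseg (pts : seq point) : nat := (size pts).-1.

Definition polyline (pts : seq point) : Prop :=
  [/\ (1 < size pts)%N,
      forall i, (i < nseg pts)%N -> pnth pts i <> pnth pts i.+1,
      (* consecutive segments share exactly one endpoint, angle <> 180 deg *)
      forall i, (i.+1 < nseg pts)%N ->
        (forall p, (on_seg (pnth pts i) (pnth pts i.+1) p /\
                    on_seg (pnth pts i.+1) (pnth pts i.+2) p) <-> p = pnth pts i.+1)
        /\ ~ on_oseg (pnth pts i) (pnth pts i.+2) (pnth pts i.+1)
    &
      forall i j, (i.+1 < j)%N -> (j < nseg pts)%N -> forall p,
        ~ (on_seg (pnth pts i) (pnth pts i.+1) p /\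
           on_seg (pnth pts j) (pnth pts j.+1) p)].

Definition on_curve (pts : seq point) (p : point) : Prop :=
  exists2 i, (i < nseg pts)%N & on_seg (pnth pts i) (pnth pts i.+1) p.

Definition in_relint (pts : seq point) (p : point) : Prop :=
  [/\ on_curve pts p, p <> pnth pts 0 & p <> pnth pts (nseg pts)].

End Geometry.

Section Drawings.
Variable R : realType.
Variable V : finType.
Variable adj : rel V.

Definition simple_graph : Prop := symmetric adj /\ irreflexive adj.

Definition edge_path (pos : V -> point R) (bends : V -> V -> seq (point R))
  (u v : V) : seq (point R) := pos u :: bends u v ++ [:: pos v].

Definition polyline_drawing (pos : V -> point R)
  (bends : V -> V -> seq (point R)) : Prop :=
  [/\ injective pos,
      forall u v, adj u v -> bends v u = rev (bends u v),
      forall u v, adj u v -> polyline (edge_path pos bends u v)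
    & forall u v w, adj u v -> w != u -> w != v ->
        ~ in_relint (edge_path pos bends u v) (pos w)].

Definition same_edge (u1 v1 u2 v2 : V) : bool :=
  ((u1 == u2) && (v1 == v2)) || ((u1 == v2) && (v1 == u2)).

Definition crossing_at pos bends (u1 v1 u2 v2 : V) (p : point R) : Prop :=
  [/\ adj u1 v1, adj u2 v2, ~~ same_edge u1 v1 u2 v2,
      in_relint (edge_path pos bends u1 v1) p
    & in_relint (edge_path pos bends u2 v2) p].

Definition right_angle_at pos bends (u1 v1 u2 v2 : V) (p : point R) : Prop :=
  let P1 := edge_path pos bends u1 v1 in
  let P2 := edge_path pos bends u2 v2 in
  exists i j, [/\ (i < nseg P1)%N, (j < nseg P2)%N,
    on_oseg (pnth P1 i) (pnth P1 i.+1) p,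
    on_oseg (pnth P2 j) (pnth P2 j.+1) p
  & orth (pnth P1 i) (pnth P1 i.+1) (pnth P2 j) (pnth P2 j.+1)].

(** total number of bends, each edge counted once *)
Definition total_bends (bends : V -> V -> seq (point R)) : nat :=
  \sum_(u : V) \sum_(v : V | (enum_rank u < enum_rank v)%N && adj u v)
     size (bends u v).

Definition RAC_drawing (b : nat) (beta : V -> V -> nat) pos bends : Prop :=
  [/\ polyline_drawing pos bends,
      forall u1 v1 u2 v2 p, crossing_at pos bends u1 v1 u2 v2 p ->
        right_angle_at pos bends u1 v1 u2 v2 p,
      (total_bends bends <= b)%N
    & forall u v, adj u v -> (size (bends u v) <= beta u v)%N].

Definition vertex_cover (C : {set V}) : Prop :=
  forall u v, adj u v -> u \in C \/ v \in C.

Definition nbhd (v : V) : {set V} := [set x | adj v x].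

Definition type_of (C S : {set V}) : {set V} :=
  [set v | (v \notin C) && (nbhd v :&: C == S)].

Definition no_bends (bends : V -> V -> seq (point R)) (v : V) : bool :=
  [forall x, adj v x ==> (bends v x == [::])].

Definition crosses_other_member pos bends (X : {set V}) (v : V) : Prop :=
  exists w x y p, [/\ w \in X, w != v, adj v x, adj w y &
                     crossing_at pos bends v x w y p].

End Drawings.

(* Let a and b be the positions of the two common neighbours in C and, for a
   member v, let A v and B v be the cotangents of the angles at a and b of the
   triangle a b v.  Members without bends draw their edges as the segments va
   and vb, so a crossing between two members pairs an edge to a with an edge to
   b (two segments ending at the same point cannot cross at a right angle).
   If va crosses xb then v and x lie on the same side of the line ab and are
   interleaved: A x < A v and B v < B x; orthogonality means A v * B x = 1,
   i.e. the two angles add up to 90 degrees.  Since no vertex lies on an edge, A and B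
   are injective on each side.  These facts force any two crossing pairs on
   the same side to coincide, so each side holds at most two members involved
   in crossings. *)

From mathcomp Require Import all_boot all_order all_algebra.
From mathcomp Require Import reals.
From mathcomp Require Import ring lra.
Set Implicit Arguments. Unset Strict Implicit. Unset Printing Implicit Defensive.
Import Order.TTheory GRing.Theory Num.Theory.
Local Open Scope ring_scope.

Lemma ltr_pdiv2 (R : numFieldType) (x y z w : R) : 0 < y -> 0 < w ->
  (x / y < z / w) = (x * w < z * y).
Proof. by move=> y0 w0; rewrite ltr_pdivrMr // mulrAC ltr_pdivlMr. Qed.

Lemma normrM_same_sign (R : realDomainType) (x y : R) :
  0 < x * y -> `|x| * y = x * `|y|.
Proof.
move=> xy; have [x0|x0] := ltP 0 x.
  by rewrite !gtr0_norm // -(pmulr_rgt0 _ x0).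
have y0 : y < 0 by nra.
by rewrite !ltr0_norm //; [ring | nra].
Qed.

Lemma one_sub_ratio_01 (R : numFieldType) (x y : R) : 0 < x -> x < y ->
  0 < 1 - x / y < 1.
Proof.
move=> x0 xy; have y0 := lt_trans x0 xy.
by rewrite subr_gt0 ltr_pdivrMr // mul1r xy ltrBlDr ltrDl divr_gt0.
Qed.

Section Frame.
Variable R : realType.
Implicit Types (a b p q z w : point R) (s t : R).

(* Coordinates of [z] in the frame with origin [a] and first axis along [b - a],
   both scaled by |b - a|: [a] and [b] have coordinates (0, 0) and (sqdist a b, 0). *)
Definition frameX a b z := (z.1 - a.1) * (b.1 - a.1) + (z.2 - a.2) * (b.2 - a.2).
Definition frameY a b z := (b.1 - a.1) * (z.2 - a.2) - (b.2 - a.2) * (z.1 - a.1).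
Definition sqdist a b := (b.1 - a.1) ^+ 2 + (b.2 - a.2) ^+ 2.
(* The cotangent of the angle at [a] of the triangle [a b z]. *)
Definition cot a b z := frameX a b z / `|frameY a b z|.

Lemma frameX_lerp a b p q t :
  frameX a b (lerp p q t) = frameX a b p + t * (frameX a b q - frameX a b p).
Proof. rewrite /frameX /lerp /=; ring. Qed.

Lemma frameY_lerp a b p q t :
  frameY a b (lerp p q t) = frameY a b p + t * (frameY a b q - frameY a b p).
Proof. rewrite /frameY /lerp /=; ring. Qed.

Lemma frameX_origin a b : frameX a b a = 0.
Proof. rewrite /frameX; ring. Qed.

Lemma frameY_origin a b : frameY a b a = 0.
Proof. rewrite /frameY; ring. Qed.

Lemma frameX_end a b : frameX a b b = sqdist a b.
Proof. rewrite /frameX /sqdist; ring. Qed.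

Lemma frameY_end a b : frameY a b b = 0.
Proof. rewrite /frameY; ring. Qed.

Lemma frameX_swap a b z : frameX b a z = sqdist a b - frameX a b z.
Proof. rewrite /frameX /sqdist; ring. Qed.

Lemma frameY_swap a b z : frameY b a z = - frameY a b z.
Proof. rewrite /frameY; ring. Qed.

Lemma sqdist_gt0 a b : a <> b -> 0 < sqdist a b.
Proof.
move=> ab; rewrite lt_def addr_ge0 ?sqr_ge0 // andbT paddr_eq0 ?sqr_ge0 //.
rewrite !sqrf_eq0 !subr_eq0; apply/negP => /andP[/eqP e1 /eqP e2]; apply: ab.
by case: a b e1 e2 => [? ?] [? ?] /= -> ->.
Qed.

Lemma frame_inj a b z w : a <> b ->
  frameX a b z = frameX a b w -> frameY a b z = frameY a b w -> z = w.
Proof.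
move=> ab eX eY; have /lt0r_neq0 L0 := sqdist_gt0 ab.
have e1 : sqdist a b * (z.1 - w.1) = 0.
  transitivity ((b.1 - a.1) * (frameX a b z - frameX a b w)
                - (b.2 - a.2) * (frameY a b z - frameY a b w)).
    rewrite /frameX /frameY /sqdist; ring.
  by rewrite eX eY !subrr; ring.
have e2 : sqdist a b * (z.2 - w.2) = 0.
  transitivity ((b.2 - a.2) * (frameX a b z - frameX a b w)
                + (b.1 - a.1) * (frameY a b z - frameY a b w)).
    rewrite /frameX /frameY /sqdist; ring.
  by rewrite eX eY !subrr; ring.
move/eqP: e1 e2; rewrite mulf_eq0 (negbTE L0) subr_eq0 => /eqP e1 /eqP.
rewrite mulf_eq0 (negbTE L0) subr_eq0 => /eqP e2.
by case: z w e1 e2 {eX eY} => [? ?] [? ?] /= -> ->.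
Qed.

Lemma orth_frame a b p q p' q' : orth p q p' q' ->
  (frameX a b q - frameX a b p) * (frameX a b q' - frameX a b p') +
  (frameY a b q - frameY a b p) * (frameY a b q' - frameY a b p') = 0.
Proof.
rewrite /orth => o.
transitivity (sqdist a b * ((q.1 - p.1) * (q'.1 - p'.1) + (q.2 - p.2) * (q'.2 - p'.2))).
  rewrite /frameX /frameY /sqdist; ring.
by rewrite o mulr0.
Qed.

Lemma orth_sym p q p' q' : orth p q p' q' -> orth p' q' p q.
Proof. by rewrite /orth => <-; ring. Qed.

Lemma cot_add_gt0 a b z : a <> b -> frameY a b z != 0 -> 0 < cot a b z + cot b a z.
Proof.
move=> ab y0; rewrite /cot (frameX_swap a b) (frameY_swap a b) normrN -mulrDl subrKC.
by rewrite divr_gt0 ?normr_gt0 //; apply: sqdist_gt0.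
Qed.

Lemma on_oseg_in_relint p q z : p <> q -> on_oseg p q z -> in_relint [:: p; q] z.
Proof.
move=> pq [s [/andP[s0 s1] ->]]; have L0 := sqdist_gt0 pq.
split; first by exists 0%N => //; exists s; rewrite !ltW.
- move/(congr1 (frameX p q)); rewrite frameX_lerp frameX_origin frameX_end.
  by move/eqP; rewrite subr0 add0r mulf_eq0 !gt_eqF.
- move/(congr1 (frameX p q)); rewrite frameX_lerp frameX_origin frameX_end.
  move/eqP; rewrite subr0 add0r -subr_eq0 -{2}[sqdist p q]mul1r -mulrBl.
  by rewrite mulf_eq0 subr_eq0 (lt_eqF s1) gt_eqF.
Qed.

Lemma orth_oseg_common_end p q c z :
  on_oseg p c z -> on_oseg q c z -> orth p c q c -> p = c.
Proof.
move=> [s [/andP[_ s1] ->]] [t [_ e]] o; apply/eqP/negPn/negP => /eqP pc.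
have /(congr1 fst) /= e1 := e; have /(congr1 snd) /= e2 := e.
have f1 : (1 - s) * (c.1 - p.1) = (1 - t) * (c.1 - q.1).
  by transitivity (c.1 - (p.1 + s * (c.1 - p.1))); [ring | rewrite e1; ring].
have f2 : (1 - s) * (c.2 - p.2) = (1 - t) * (c.2 - q.2).
  by transitivity (c.2 - (p.2 + s * (c.2 - p.2))); [ring | rewrite e2; ring].
have : (1 - s) * sqdist p c = 0.
  transitivity ((c.1 - p.1) * ((1 - s) * (c.1 - p.1)) + (c.2 - p.2) * ((1 - s) * (c.2 - p.2))).
    by rewrite /sqdist; ring.
  rewrite f1 f2; move: o; rewrite /orth => o.
  by transitivity ((1 - t) * ((c.1 - p.1) * (c.1 - q.1) + (c.2 - p.2) * (c.2 - q.2)));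
    [ring | rewrite o mulr0].
by move/eqP; rewrite mulf_eq0 subr_eq0 (gt_eqF s1) gt_eqF ?sqdist_gt0.
Qed.

Lemma orth_oseg_cot a b p q z : a <> b -> p <> a -> q <> b ->
  on_oseg p a z -> on_oseg q b z -> orth p a q b ->
  [/\ 0 < frameY a b p * frameY a b q, cot a b q < cot a b p & cot b a p < cot b a q].
Proof.
move=> ab pa qb [s [/andP[s0 s1] ->]] [t [/andP[t0 t1] e]] o.
have L0 := sqdist_gt0 ab; rewrite /cot !(frameX_swap a b) !(frameY_swap a b) !normrN.
set L := sqdist a b in L0 *.
set xp := frameX a b p; set yp := frameY a b p.
set xq := frameX a b q; set yq := frameY a b q.
have hx : (1 - s) * xp = xq + t * (L - xq).
  move: (congr1 (frameX a b) e); rewrite !frameX_lerp frameX_origin frameX_end -/L -/xp -/xq.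
  by move=> <-; ring.
have hy : (1 - s) * yp = (1 - t) * yq.
  move: (congr1 (frameY a b) e); rewrite !frameY_lerp frameY_origin frameY_end -/yp -/yq.
  by move=> h; transitivity (yp + s * (0 - yp)); [ring | rewrite h; ring].
have ho : xp * (L - xq) = yp * yq.
  move: (orth_frame a b o).
  rewrite frameX_origin frameY_origin frameX_end frameY_end -/L -/xp -/xq -/yp -/yq.
  by move=> h; transitivity (xp * (L - xq) + ((0 - xp) * (L - xq) + (0 - yp) * (0 - yq)));
    [rewrite h addr0 | ring].
have yp0 : yp != 0.
  apply/eqP => yp0; move: hy ho; rewrite yp0 mulr0 mul0r => /esym/eqP.
  rewrite mulf_eq0 subr_eq0 (gt_eqF t1) /= => /eqP yq0 /eqP.
  rewrite mulf_eq0 subr_eq0 => /orP[/eqP xp0|/eqP xqL].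
    by apply: pa; apply: (frame_inj ab); rewrite ?frameX_origin ?frameY_origin.
  by apply: qb; apply: (frame_inj ab); rewrite ?frameX_end ?frameY_end.
have yy : 0 < yp * yq.
  have hy2 : (1 - s) * (yp * yp) = (1 - t) * (yp * yq) by rewrite mulrA hy; ring.
  have : 0 < yp * yp by rewrite -expr2 exprn_even_gt0.
  nra.
have Yq0 : 0 < `|yq| by rewrite normr_gt0; apply: contraTneq yy => ->; rewrite mulr0 ltxx.
have Yp0 : 0 < `|yp| by rewrite normr_gt0.
have hY : (1 - s) * `|yp| = (1 - t) * `|yq|.
  have s1p : 0 < 1 - s by rewrite subr_gt0.
  have t1p : 0 < 1 - t by rewrite subr_gt0.
  by move: (congr1 Num.norm hy); rewrite !normrM (gtr0_norm s1p) (gtr0_norm t1p).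
split => //; rewrite ltr_pdiv2 // -subr_gt0.
- have e1 : (1 - s) * (xp * `|yq| - xq * `|yp|) = t * L * `|yq|.
    transitivity (((1 - s) * xp) * `|yq| - xq * ((1 - s) * `|yp|)); first ring.
    by rewrite hx hY; ring.
  by move: (mulr_gt0 (mulr_gt0 t0 L0) Yq0); rewrite -e1 pmulr_rgt0 // subr_gt0.
- have e2 : (1 - s) * ((L - xq) * `|yp| - (L - xp) * `|yq|) = s * L * `|yq|.
    transitivity ((L - xq) * ((1 - s) * `|yp|) - (1 - s) * L * `|yq| + ((1 - s) * xp) * `|yq|);
      first ring.
    by rewrite hx hY; ring.
  by move: (mulr_gt0 (mulr_gt0 s0 L0) Yq0); rewrite -e2 pmulr_rgt0 // subr_gt0.
Qed.

Lemma cot_interleaved_meet a b p q : a <> b -> 0 < frameY a b p * frameY a b q ->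
  cot a b q < cot a b p -> cot b a p < cot b a q ->
  exists z, on_oseg p a z /\ on_oseg q b z.
Proof.
rewrite /cot !(frameX_swap a b) !(frameY_swap a b) !normrN => ab.
have L0 := sqdist_gt0 ab; set L := sqdist a b in L0 *.
set xp := frameX a b p; set yp := frameY a b p.
set xq := frameX a b q; set yq := frameY a b q => yy.
have Yp0 : 0 < `|yp| by rewrite normr_gt0; apply: contraTneq yy => ->; rewrite mul0r ltxx.
have Yq0 : 0 < `|yq| by rewrite normr_gt0; apply: contraTneq yy => ->; rewrite mulr0 ltxx.
rewrite !ltr_pdiv2 // => hq hp.
have LYp := mulr_gt0 L0 Yp0; have LYq := mulr_gt0 L0 Yq0.
(* The crossing parameters solve the two frame-coordinate equations. *)
pose E := xp * `|yq| - xq * `|yp| + L * `|yp|.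
have E0 : E != 0 by rewrite gt_eqF // /E; lra.
exists (lerp p a (1 - L * `|yq| / E)); split.
  by exists (1 - L * `|yq| / E); split => //; apply: one_sub_ratio_01 => //; rewrite /E; lra.
exists (1 - L * `|yp| / E); split; first by apply: one_sub_ratio_01 => //; rewrite /E; lra.
apply: (frame_inj ab).
  rewrite !frameX_lerp frameX_origin frameX_end -/L -/xp -/xq /E; field; exact: E0.
rewrite !frameY_lerp frameY_origin frameY_end -/yp -/yq.
transitivity (L * (yp * `|yq|) / E); first by field.
by rewrite -normrM_same_sign //; field.
Qed.

Lemma orth_cot_mul a b p q : 0 < frameY a b p * frameY a b q -> orth p a q b ->
  cot a b p * cot b a q = 1.
Proof.
move=> yy /(orth_frame a b); rewrite frameX_origin frameY_origin frameX_end frameY_end.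
rewrite /cot (frameX_swap a b) (frameY_swap a b) normrN mulf_div -normrM gtr0_norm // => o.
have -> : frameX a b p * (sqdist a b - frameX a b q) = frameY a b p * frameY a b q.
  by rewrite -[LHS]addr0 -o; ring.
by rewrite divff // gt_eqF.
Qed.

Lemma cot_eq_oseg a b p q : a <> b -> 0 < frameY a b p * frameY a b q ->
  `|frameY a b q| < `|frameY a b p| -> cot a b p = cot a b q -> on_oseg p a q.
Proof.
rewrite /cot => ab yy lt e.
have Yq0 : 0 < `|frameY a b q|.
  by rewrite normr_gt0; apply: contraTneq yy => ->; rewrite mulr0 ltxx.
have Yp0 := lt_trans Yq0 lt.
exists (1 - `|frameY a b q| / `|frameY a b p|); split; first exact: one_sub_ratio_01.
apply: (frame_inj ab).
  rewrite frameX_lerp frameX_origin -[frameX a b q](divfK (lt0r_neq0 Yq0)) -e.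
  field; exact: lt0r_neq0.
rewrite frameY_lerp frameY_origin.
transitivity (`|frameY a b p| * frameY a b q / `|frameY a b p|).
  by field; exact: lt0r_neq0.
by rewrite normrM_same_sign //; field; exact: lt0r_neq0.
Qed.

Lemma cot_eq_oseg_or a b p q : a <> b -> p <> q -> 0 < frameY a b p * frameY a b q ->
  cot a b p = cot a b q -> on_oseg p a q \/ on_oseg q a p.
Proof.
move=> ab pq yy e.
have Yp0 : 0 < `|frameY a b p|.
  by rewrite normr_gt0; apply: contraTneq yy => ->; rewrite mul0r ltxx.
have [lt|gt|eqY] := ltgtP `|frameY a b q| `|frameY a b p|.
- by left; apply: (cot_eq_oseg ab yy lt e).
- by right; apply: (cot_eq_oseg ab _ gt); rewrite // mulrC.
- exfalso; apply: pq; apply: (frame_inj ab).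
    by move: e; rewrite /cot eqY => /(mulIf (invr_neq0 (lt0r_neq0 Yp0))).
  apply: (mulfI (lt0r_neq0 Yp0)).
  by rewrite -{1}eqY normrM_same_sign // mulrC.
Qed.

End Frame.

Section InterleavedPairs.
Variables (R : realFieldType) (T : finType) (K : {set T}) (A B : T -> R).
Hypothesis AB_gt0 : {in K, forall v, 0 < A v + B v}.
Hypothesis A_inj : {in K &, injective A}.
Hypothesis B_inj : {in K &, injective B}.
Hypothesis mulAB_interleaved :
  {in K &, forall u x, A x < A u -> B u < B x -> A u * B x = 1}.

Definition interleaved u x := [&& u \in K, x \in K, A x < A u & B u < B x].

Lemma interleaved_mulAB u x : interleaved u x -> A u * B x = 1.
Proof. by case/and4P => uK xK; apply: mulAB_interleaved. Qed.

Lemma interleaved_gt0 u x : interleaved u x -> 0 < A u /\ 0 < B x.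
Proof.
move=> uxI; have /and4P[uK _ _ Bux] := uxI; have ABu := AB_gt0 uK.
have e := interleaved_mulAB uxI; split; nra.
Qed.

Lemma interleaved_leA u x y z : interleaved u x -> interleaved y z -> A u <= A y.
Proof.
(* If A y < A u, then either u and z are interleaved too, whence A u = A y,
   or B z <= B u, whence A y * B z < A u * B x. *)
move=> uxI yzI; rewrite leNgt; apply/negP => Ayu.
have /and4P[uK _ _ Bux] := uxI; have /and4P[yK zK Azy _] := yzI.
have [Au0 _] := interleaved_gt0 uxI; have [_ Bz0] := interleaved_gt0 yzI.
have [Buz|Bzu] := ltP (B u) (B z).
  have uzI : interleaved u z by rewrite /interleaved uK zK (lt_trans Azy Ayu).
  have : A u * B z = A y * B z by rewrite interleaved_mulAB // interleaved_mulAB.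
  by move/(mulIf (lt0r_neq0 Bz0)) => Auy; move: Ayu; rewrite Auy ltxx.
have : A y * B z < A u * B x.
  apply: (@lt_le_trans _ _ (A u * B z)); first by rewrite ltr_pM2r.
  by rewrite ler_pM2l // ltW // (le_lt_trans Bzu).
by rewrite !interleaved_mulAB // ltxx.
Qed.

Lemma interleaved_uniq u x y z : interleaved u x -> interleaved y z -> u = y /\ x = z.
Proof.
move=> uxI yzI; have /and4P[uK xK _ _] := uxI; have /and4P[yK zK _ _] := yzI.
have Auy : A u = A y.
  by apply/le_anti; rewrite (interleaved_leA uxI yzI) (interleaved_leA yzI uxI).
have [Au0 _] := interleaved_gt0 uxI.
split; first exact: A_inj.
apply: B_inj => //; apply: (mulfI (lt0r_neq0 Au0)).
by rewrite interleaved_mulAB // Auy interleaved_mulAB.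
Qed.

Lemma card_interleaved :
  (#|[set v | [exists w, interleaved v w || interleaved w v]]| <= 2)%N.
Proof.
set X := [set v | _].
have [->|[v0]] := set_0Vmem X; first by rewrite cards0.
rewrite inE => /existsP[w0 h0].
have [u0 [x0 ux0]] : exists u0 x0, interleaved u0 x0.
  by case/orP: h0 => h; [exists v0, w0 | exists w0, v0].
have /subset_leq_card/leq_trans-> // : X \subset [set u0; x0].
  apply/subsetP => v; rewrite !inE => /existsP[w /orP[] vw].
    by have [-> _] := interleaved_uniq vw ux0; rewrite eqxx.
  by have [_ ->] := interleaved_uniq vw ux0; rewrite eqxx orbT.
by rewrite cards2; case: (_ != _).
Qed.

End InterleavedPairs.

Section TwoNeighbourType.
Variables (R : realType) (V : finType) (adj : rel V).
Variables (pos : V -> point R) (bends : V -> V -> seq (point R)).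
Hypothesis pos_inj : injective pos.
Hypothesis no_vertex_on_edge : forall u v w, adj u v -> w != u -> w != v ->
  ~ in_relint (edge_path pos bends u v) (pos w).
Hypothesis rac : forall u1 v1 u2 v2 p, crossing_at adj pos bends u1 v1 u2 v2 p ->
  right_angle_at pos bends u1 v1 u2 v2 p.
Variables (C : {set V}) (c1 c2 : V).
Hypothesis cover : vertex_cover adj C.
Hypotheses (c1C : c1 \in C) (c2C : c2 \in C) (c12 : c1 != c2).

Let T := [set v in type_of adj C [set c1; c2] | no_bends adj bends v].
Let A v := cot (pos c1) (pos c2) (pos v).
Let B v := cot (pos c2) (pos c1) (pos v).
Let Y v := frameY (pos c1) (pos c2) (pos v).

Lemma member_notin_cover v : v \in T -> v \notin C.
Proof. by rewrite !inE => /andP[/andP[]]. Qed.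

Lemma member_adj v x : v \in T -> adj v x = (x \in [set c1; c2]).
Proof.
rewrite inE => /andP[]; rewrite inE => /andP[vC /eqP <-] _; rewrite !inE.
by case vx: (adj v x) => //=; case: (cover vx) => // vC'; rewrite vC' in vC.
Qed.

Lemma member_edge_path v x : v \in T -> adj v x ->
  edge_path pos bends v x = [:: pos v; pos x].
Proof.
by rewrite !inE => /andP[_ /forallP/(_ x)] /implyP nb /nb/eqP; rewrite /edge_path => ->.
Qed.

Lemma member_pos_neq v c : v \in T -> c \in C -> pos v <> pos c.
Proof. by move=> /member_notin_cover vC cC /pos_inj vc; rewrite vc cC in vC. Qed.

Let pos_c12 : pos c1 <> pos c2.
Proof. by move/pos_inj=> e; move: c12; rewrite e eqxx. Qed.

Lemma member_right_angle v x w y p : v \in T -> w \in T ->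
  crossing_at adj pos bends v x w y p ->
  [/\ on_oseg (pos v) (pos x) p, on_oseg (pos w) (pos y) p
    & orth (pos v) (pos x) (pos w) (pos y)].
Proof.
move=> vT wT cr; have [vx wy _ _ _] := cr.
by move: (rac cr); rewrite /right_angle_at !member_edge_path // => -[[|i] [[|j] []]].
Qed.

Lemma member_not_on_edge u w c : u \in T -> w \in T -> w != u -> c \in [set c1; c2] ->
  ~ on_oseg (pos u) (pos c) (pos w).
Proof.
move=> uT wT wu cS; have cC : c \in C by move: cS; rewrite !inE => /orP[] /eqP ->.
have uc : adj u c by rewrite member_adj.
have wc : w != c by apply: contraNneq (member_notin_cover wT) => ->.
move/(on_oseg_in_relint (member_pos_neq uT cC)).
by rewrite -member_edge_path //; apply: no_vertex_on_edge.
Qed.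

Lemma member_cot_inj c q u w : c \in [set c1; c2] -> pos c <> q -> u \in T -> w \in T ->
  0 < frameY (pos c) q (pos u) * frameY (pos c) q (pos w) ->
  cot (pos c) q (pos u) = cot (pos c) q (pos w) -> u = w.
Proof.
move=> cS cq uT wT yy e; case: (eqVneq u w) => // uw; exfalso.
have puw : pos u <> pos w by move/pos_inj/eqP; rewrite (negbTE uw).
have [] := cot_eq_oseg_or cq puw yy e.
  by apply: member_not_on_edge; rewrite // eq_sym.
exact: member_not_on_edge.
Qed.

Lemma members_crossing v x w y p : v \in T -> w \in T ->
  crossing_at adj pos bends v x w y p ->
  0 < Y v * Y w /\ ((A w < A v) && (B v < B w) || (A v < A w) && (B w < B v)).
Proof.
move=> vT wT cr; have [ovp owp o] := member_right_angle vT wT cr.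
have [+ + _ _ _] := cr; rewrite !member_adj // !inE => /orP[]/eqP ex /orP[]/eqP ey;
  subst x y.
- by case: (member_pos_neq vT c1C); apply: orth_oseg_common_end ovp owp o.
- by have [yy -> ->] := orth_oseg_cot pos_c12 (member_pos_neq vT c1C)
    (member_pos_neq wT c2C) ovp owp o.
- have [yy -> ->] := orth_oseg_cot pos_c12 (member_pos_neq wT c1C)
    (member_pos_neq vT c2C) owp ovp (orth_sym o).
  by rewrite mulrC orbT.
- by case: (member_pos_neq vT c2C); apply: orth_oseg_common_end ovp owp o.
Qed.

Lemma members_interleaved_mul u x : u \in T -> x \in T -> 0 < Y u * Y x ->
  A x < A u -> B u < B x -> A u * B x = 1.
Proof.
move=> uT xT yy Axu Bux.
have [p [oup oxp]] := cot_interleaved_meet pos_c12 yy Axu Bux.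
have uc1 : adj u c1 by rewrite member_adj // !inE eqxx.
have xc2 : adj x c2 by rewrite member_adj // !inE eqxx orbT.
have cr : crossing_at adj pos bends u c1 x c2 p.
  split; rewrite ?member_edge_path //.
  - rewrite /same_edge (negbTE c12) andbF /=.
    by apply: contraNN (member_notin_cover uT) => /andP[/eqP-> _].
  - exact: on_oseg_in_relint (member_pos_neq uT c1C) oup.
  - exact: on_oseg_in_relint (member_pos_neq xT c2C) oxp.
have [_ _ o] := member_right_angle uT xT cr.
exact: orth_cot_mul.
Qed.

Let side (e : R) := [set v in T | 0 < e * Y v].

Lemma side_mul_gt0 e u w : u \in side e -> w \in side e -> 0 < Y u * Y w.
Proof. rewrite !inE => /andP[_ eu] /andP[_ ew]; nra. Qed.

Lemma card_crossed_side e : (#|[set v | [exists w,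
  interleaved (side e) A B v w || interleaved (side e) A B w v]]| <= 2)%N.
Proof.
have sideT v : v \in side e -> v \in T by rewrite inE => /andP[].
apply: card_interleaved.
- move=> v; rewrite inE => /andP[_ ev]; apply: cot_add_gt0 pos_c12 _.
  by apply/eqP => y0; move: ev; rewrite /Y y0 mulr0 ltxx.
- move=> u w uS wS; apply: (member_cot_inj (c := c1) _ pos_c12 (sideT u uS) (sideT w wS)).
    by rewrite !inE eqxx.
  exact: side_mul_gt0 uS wS.
- move=> u w uS wS.
  apply: (member_cot_inj (c := c2) _ (not_eq_sym pos_c12) (sideT u uS) (sideT w wS)).
    by rewrite !inE eqxx orbT.
  by rewrite !(frameY_swap (pos c1)) mulrNN; exact: side_mul_gt0 uS wS.
- move=> u x uS xS; apply: members_interleaved_mul (sideT u uS) (sideT x xS) _.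
  exact: side_mul_gt0 uS xS.
Qed.

Lemma card_crossing_members (X : {set V}) : X \subset T ->
  {in X, forall v, crosses_other_member adj pos bends T v} -> (#|X| <= 4)%N.
Proof.
move=> XT Xcr.
pose crossed e := [set v | [exists w,
  interleaved (side e) A B v w || interleaved (side e) A B w v]].
have XS : X \subset crossed 1 :|: crossed (-1).
  apply/subsetP => v vX; have vT := subsetP XT v vX.
  have [w [x [y [p [wT _ _ _ cr]]]]] := Xcr v vX.
  have [yy vw] := members_crossing vT wT cr.
  have crossed_e e : 0 < e * Y v -> v \in crossed e.
    move=> ev; have ew : 0 < e * Y w by nra.
    have vS : v \in side e by rewrite inE vT.
    have wS : w \in side e by rewrite inE wT.
    by rewrite inE; apply/existsP; exists w; rewrite /interleaved vS wS.
  have [Yv0|Yv0] := ltP 0 (Y v); first by rewrite inE crossed_e ?mul1r.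
  rewrite inE (crossed_e (-1)) ?orbT // mulN1r oppr_gt0 lt_neqAle Yv0 andbT.
  by apply: contraTneq yy => ->; rewrite mul0r ltxx.
apply: leq_trans (subset_leq_card XS) _; apply: leq_trans (leq_card_setU _ _) _.
exact: leq_add (card_crossed_side 1) (card_crossed_side (-1)).
Qed.

End TwoNeighbourType.

Theorem lemma10 (R : realType) (V : finType) (adj : rel V) (b : nat)
  (beta : V -> V -> nat) (C S : {set V})
  (pos : V -> point R) (bends : V -> V -> seq (point R)) :
  simple_graph adj ->
  (forall u v, adj u v -> beta u v = beta v u /\ (beta u v <= 3)%N) ->
  vertex_cover adj C ->
  RAC_drawing adj b beta pos bends ->
  S \subset C -> #|S| = 2 ->
  let T' := [set v in type_of adj C S | no_bends adj bends v] in
  forall X : {set V}, X \subset T' ->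
    (forall v, v \in X -> crosses_other_member adj pos bends T' v) ->
    (#|X| <= 4)%N.
Proof.
move=> _ _ cover [[pos_inj _ _ no_vertex_on_edge] rac _ _] SC S2 T'.
have /cards2P [c1 [c2 [c12 SE]]] : #|S| == 2%N by rewrite S2.
have c1C : c1 \in C by apply: (subsetP SC); rewrite SE !inE eqxx.
have c2C : c2 \in C by apply: (subsetP SC); rewrite SE !inE eqxx orbT.
rewrite /T' SE; exact: card_crossing_members.
Qed.
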